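(* Let $p\in\{3,4,\dots\}$, $a\ge0$, $b>0$ satisfy either ($a>0$ and $b\in[p/2-1,p/2]$) or ($a=0$ and $b\in[p/2-1,p/2)$). Let $l\in\{1,2\}$ and let $h:\mathbb{Z}^+\to\mathbb{R}$ satisfy $h(n)=O(n^{-l})$ as $n\to\infty$. For $y>0$ let $N\sim\mathrm{Poisson}(y/2)$. Then there exists $d\in(0,\infty)$ such that for every $k\in\{1,2,3\}$ and every $y>0$, $$\left|\frac{E[h(N)w_{k-1}(N)\mid y]}{E[w_{k-1}(N)\mid y]}\right|\le\frac{d}{y^l}.$$
   Context: $\mathbb{Z}^+=\{0,1,2,\dots\}$; $g_0(z)=(a+z)^{-b}$; for $n\in\mathbb{Z}^+$ and $k\in\{0,1,2,3\}$, $w_k(n)=\int_0^\infty\frac{g_0(z)(z/2)^{n+p/2+k-1}e^{-z/2}}{2\Gamma(n+p/2)}dz$. $E[\cdot\mid y]$ denotes expectation with $N\sim\mathrm{Poisson}(y/2)$. *)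

From Stdlib Require Import Reals.
From Coquelicot Require Import Coquelicot.
Open Scope R_scope.

Definition Gamma (s : R) : R :=
  RInt_gen (fun t => Rpower t (s - 1) * exp (- t)) (at_right 0) (Rbar_locally p_infty).

Definition g0 (a b : R) (z : R) : R := Rpower (a + z) (- b).

Definition w (p : nat) (a b : R) (k : nat) (n : nat) : R :=
  RInt_gen (fun z => g0 a b z * Rpower (z / 2) (INR n + INR p / 2 + INR k - 1)
                     * exp (- z / 2) / (2 * Gamma (INR n + INR p / 2)))
           (at_right 0) (Rbar_locally p_infty).

Definition PoisE (y : R) (f : nat -> R) : R :=
  Series (fun n => exp (- (y / 2)) * (y / 2) ^ n / INR (Factorial.fact n) * f n).

(* The weight w_k(n) is J(n + p/2 + k) / (2 Gamma(n + p/2)), where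
   J(s) = int_0^oo g0(z) (z/2)^(s-1) e^(-z/2) dz.  The derivative of g0(z) (z/2)^s e^(-z/2)
   integrates to 0 over (0, oo), which gives J(s+1) = s J(s) - 2 b M(s) with
   M(s) = int_0^oo g0(z) (z/2)^s e^(-z/2) / (a+z) dz between 0 and J(s)/2; hence
   (s - b) J(s) <= J(s+1) <= s J(s), and Gamma(s+1) = s Gamma(s) is the case b = 0.
   This bounds w_k(n+1)/w_k(n) above, and (as b <= p/2) below by some 1/K.
   For N ~ Poisson(x), P(N = n)/(n+1) = P(N = n+1)/x: every factor 1/(N+1) in E[h(N) w(N)]
   shifts the index by one at the price K/x, so |E[h w]| <= H l! K^l x^(-l) E[w] when
   |h(n)| <= H/(n+1)^l; here x = y/2. *)

From Stdlib Require Import Reals Factorial Lra Lia Classical FunctionalExtensionality.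
From Coquelicot Require Import Coquelicot.
Open Scope R_scope.

Local Notation is_RInt_0_oo f L := (is_RInt_gen f (at_right 0) (Rbar_locally p_infty) L).
Local Notation RInt_0_oo f := (RInt_gen f (at_right 0) (Rbar_locally p_infty)).

Lemma filter_prod_window u v : 0 < u ->
  filter_prod (at_right 0) (Rbar_locally p_infty) (fun ab => 0 < fst ab < u /\ v < snd ab).
Proof.
  intros Hu. apply Filter_prod with (fun x => 0 < x < u) (fun y => v < y).
  - exists (mkposreal u Hu). intros x Hx Hx0.
    apply Rabs_lt_between in Hx. simpl in *. unfold minus, plus, opp in Hx; simpl in Hx. lra.
  - exists v. auto.
  - intros x y Hx Hy. simpl. auto.
Qed.

Lemma filter_prod_pos (P : R -> Prop) : (forall x, 0 < x -> P x) ->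
  filter_prod (at_right 0) (Rbar_locally p_infty)
    (fun ab => forall x, Rmin (fst ab) (snd ab) <= x <= Rmax (fst ab) (snd ab) -> P x).
Proof.
  intros HP. apply Filter_prod with (fun u => 0 < u) (fun v => 0 < v).
  - exists (mkposreal 1 Rlt_0_1). intros; assumption.
  - exists 0. auto.
  - intros u v Hu Hv x [Hx _]. apply HP.
    eapply Rlt_le_trans; [| exact Hx]. now apply Rmin_case.
Qed.

Section NonnegIntegrals.

Variable f : R -> R.
Hypothesis f_ge0 : forall x, 0 < x -> 0 <= f x.
Hypothesis f_cont : forall x, 0 < x -> continuous f x.

Lemma ex_RInt_pos u v : 0 < u -> 0 < v -> ex_RInt f u v.
Proof.
  intros Hu Hv. apply (@ex_RInt_continuous R_CompleteNormedModule).
  intros z [Hz _]. apply f_cont.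
  eapply Rlt_le_trans; [|exact Hz]. now apply Rmin_case.
Qed.

Lemma RInt_le_widen u v u' v' :
  0 < u' -> u' <= u -> u <= v -> v <= v' -> RInt f u v <= RInt f u' v'.
Proof.
  intros Hu' Hu Huv Hv.
  rewrite <- (RInt_Chasles f u' u v') by (apply ex_RInt_pos; lra).
  rewrite <- (RInt_Chasles f u v v') by (apply ex_RInt_pos; lra).
  assert (0 <= RInt f u' u) by (apply RInt_ge_0; [lra | apply ex_RInt_pos; lra | intros; apply f_ge0; lra]).
  assert (0 <= RInt f v v') by (apply RInt_ge_0; [lra | apply ex_RInt_pos; lra | intros; apply f_ge0; lra]).
  unfold plus; simpl. lra.
Qed.

Lemma RInt_le_of_is_RInt_0_oo L u v :
  is_RInt_0_oo f L -> 0 < u -> u <= v -> RInt f u v <= L.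
Proof.
  intros HL Hu Huv. apply Rnot_lt_le. intros Hlt.
  assert (Heps : 0 < RInt f u v - L) by lra.
  apply (@filter_not_empty (R * R) (filter_prod (at_right 0) (Rbar_locally p_infty)) _).
  assert (Hev := HL _ (locally_ball L (mkposreal _ Heps))). unfold filtermapi in Hev.
  generalize (filter_and _ _ Hev (filter_prod_window u v Hu)).
  apply filter_imp. intros [x y] [(I & HI & HIL) [Hx Hy]]. simpl in *.
  rewrite <- (is_RInt_unique _ _ _ _ HI) in HIL.
  assert (RInt f u v <= RInt f x y) by (apply RInt_le_widen; lra).
  apply Rabs_lt_between in HIL. unfold minus, plus, opp in HIL; simpl in HIL. lra.
Qed.

Lemma is_RInt_0_oo_of_bounded B :
  (forall u v, 0 < u -> u <= v -> RInt f u v <= B) ->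
  exists L, is_RInt_0_oo f L /\ L <= B.
Proof.
  intros HB.
  set (E := fun r => exists u v, 0 < u /\ u <= v /\ r = RInt f u v).
  destruct (completeness E) as [m [Hub Hlub]].
  { exists B. intros r (u & v & Hu & Huv & ->). auto. }
  { exists (RInt f 1 1), 1, 1. repeat split; lra. }
  exists m. split.
  2: { apply Hlub. intros r (u & v & Hu & Huv & ->). auto. }
  intros P [eps HP].
  (* some partial integral exceeds [m - eps], and so do all those over larger intervals *)
  destruct (not_all_not_ex _ (fun r => E r /\ m - eps < r)) as (r & (u0 & v0 & Hu0 & Huv0 & ->) & Hr).
  { intros Hn. assert (m <= m - eps); [|destruct eps; simpl in *; lra].
    apply Hlub. intros r Er. apply Rnot_lt_le. intros Hlt. apply (Hn r). auto. }
  unfold filtermapi. eapply filter_imp; [| apply (filter_prod_window u0 v0 Hu0)].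
  intros [x y] [Hx Hy]; simpl in *. exists (RInt f x y). split.
  { apply (@RInt_correct R_CompleteNormedModule), ex_RInt_pos; lra. }
  apply HP.
  assert (RInt f x y <= m) by (apply Hub; exists x, y; repeat split; lra).
  assert (RInt f u0 v0 <= RInt f x y) by (apply RInt_le_widen; lra).
  apply Rabs_lt_between. unfold minus, plus, opp; simpl. lra.
Qed.

End NonnegIntegrals.

Lemma is_RInt_0_oo_of_le (f g : R -> R) Lg :
  (forall x, 0 < x -> 0 <= f x <= g x) ->
  (forall x, 0 < x -> continuous f x) -> (forall x, 0 < x -> continuous g x) ->
  is_RInt_0_oo g Lg -> exists Lf, is_RInt_0_oo f Lf /\ 0 <= Lf <= Lg.
Proof.
  intros Hfg Hf Hg HLg.
  assert (Hf0 : forall x, 0 < x -> 0 <= f x) by (intros x Hx; apply Hfg, Hx).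
  assert (Hg0 : forall x, 0 < x -> 0 <= g x) by (intros x Hx; specialize (Hfg x Hx); lra).
  destruct (is_RInt_0_oo_of_bounded f Hf0 Hf Lg) as (Lf & HLf & HLfg).
  { intros u v Hu Huv. eapply Rle_trans; [| apply (RInt_le_of_is_RInt_0_oo g Hg0 Hg Lg u v); auto].
    apply RInt_le; auto; try (apply ex_RInt_pos; auto; lra).
    intros x Hx. apply Hfg. lra. }
  exists Lf. split; [|split]; auto.
  replace 0 with (RInt f 1 1) by (rewrite RInt_point; reflexivity).
  apply (RInt_le_of_is_RInt_0_oo f); auto; lra.
Qed.

Lemma exp_le_exp x y : x <= y -> exp x <= exp y.
Proof. intros [H | ->]; [left; apply exp_increasing, H | apply Rle_refl]. Qed.

Lemma exp_le_1 x : x <= 0 -> exp x <= 1.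
Proof. intros Hx. rewrite <- exp_0. now apply exp_le_exp. Qed.

Lemma Rpower_pos x y : 0 < Rpower x y.
Proof. apply exp_pos. Qed.

Lemma Rpower_mul_exp_le r : 0 <= r ->
  exists C, 0 < C /\ forall t, 0 < t -> Rpower t r * exp (- t) <= C * exp (- t / 2).
Proof.
  intros Hr.
  (* [ln u <= u - 1] at [u = lam t], where [r lam <= 1/2] *)
  set (lam := / (2 * (r + 1))).
  assert (Hlam : 0 < lam) by (apply Rinv_0_lt_compat; lra).
  assert (Hrlam : r * lam <= / 2).
  { unfold lam. rewrite Rinv_mult.
    apply Rmult_le_reg_r with (r + 1); [lra |].
    replace (r * (/ 2 * / (r + 1)) * (r + 1)) with (r / 2) by (field; lra). lra. }
  exists (exp (r * (-1 - ln lam))). split; [apply exp_pos |].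
  intros t Ht. unfold Rpower. rewrite <- !exp_plus. apply exp_le_exp.
  assert (Hln := exp_ineq1_le (ln (lam * t))).
  rewrite exp_ln, ln_mult in Hln by nra.
  assert (r * ln t <= r * (lam * t - 1 - ln lam)) by (apply Rmult_le_compat_l; lra).
  nra.
Qed.

Lemma RInt_Rpower_le sg Q u : 0 < sg -> 0 <= Q -> 0 < u <= 1 ->
  RInt (fun z => Q * Rpower z (sg - 1)) u 1 <= Q / sg.
Proof.
  intros Hsg HQ Hu.
  assert (H : is_RInt (fun z => Q * Rpower z (sg - 1)) u 1
                (minus (Q * Rpower 1 sg / sg) (Q * Rpower u sg / sg))).
  { apply (@is_RInt_derive R_CompleteNormedModule (fun z => Q * Rpower z sg / sg)).
    - intros x Hx. rewrite Rmin_left in Hx by lra.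
      unfold Rpower. auto_derive; [lra |].
      replace (sg * ln x) with ((sg - 1) * ln x + ln x) by ring.
      rewrite exp_plus, exp_ln by lra. field. lra.
    - intros x Hx. rewrite Rmin_left in Hx by lra.
      apply (@ex_derive_continuous R_AbsRing R_NormedModule). unfold Rpower. auto_derive. lra. }
  rewrite (is_RInt_unique _ _ _ _ H). unfold minus, plus, opp; simpl.
  replace (Rpower 1 sg) with 1 by (unfold Rpower; rewrite ln_1, Rmult_0_r, exp_0; reflexivity).
  assert (0 <= Q * Rpower u sg / sg).
  { apply Rdiv_le_0_compat; [apply Rmult_le_pos; [lra | left; apply Rpower_pos] | lra]. }
  lra.
Qed.

Lemma RInt_exp_le C c v : 0 < c -> 0 <= C -> 1 <= v ->
  RInt (fun z => C * exp (- (z / c) / 2)) 1 v <= 2 * c * C.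
Proof.
  intros Hc HC Hv.
  assert (H : is_RInt (fun z => C * exp (- (z / c) / 2)) 1 v
                (minus (- 2 * c * C * exp (- (v / c) / 2)) (- 2 * c * C * exp (- (1 / c) / 2)))).
  { apply (@is_RInt_derive R_CompleteNormedModule (fun z => - 2 * c * C * exp (- (z / c) / 2))).
    - intros x _. auto_derive; [auto |]. unfold Rdiv. field. lra.
    - intros x _. apply (@ex_derive_continuous R_AbsRing R_NormedModule). auto_derive. auto. }
  rewrite (is_RInt_unique _ _ _ _ H). unfold minus, plus, opp; simpl.
  assert (0 < exp (- (v / c) / 2)) by apply exp_pos.
  assert (exp (- (1 / c) / 2) <= 1).
  { apply exp_le_1. assert (0 < 1 / c) by (apply Rdiv_lt_0_compat; lra). lra. }
  assert (0 <= c * C) by (apply Rmult_le_pos; lra).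
  nra.
Qed.

Lemma filterlim_scal_exp_0 {T} {F : (T -> Prop) -> Prop} {FF : Filter F} (g : T -> R) k :
  filterlim g F (Rbar_locally m_infty) -> filterlim (fun t => k * exp (g t)) F (locally 0).
Proof.
  intros Hg.
  replace (locally 0) with (Rbar_locally (Rbar_mult k 0)) by (simpl; now rewrite Rmult_0_r).
  apply (filterlim_comp _ _ _ (fun t => exp (g t)) (Rmult k) _ (locally 0));
    [| apply filterlim_Rbar_mult_l].
  exact (filterlim_comp _ _ _ g exp _ _ _ Hg is_lim_exp_m).
Qed.

Lemma filterlim_Rmult_m_infty (k : R) (l : Rbar) :
  is_Rbar_mult l k m_infty -> filterlim (Rmult k) (Rbar_locally l) (Rbar_locally m_infty).
Proof.
  intros Hk. rewrite <- (is_Rbar_mult_unique _ _ _ Hk), Rbar_mult_comm.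
  apply filterlim_Rbar_mult_l.
Qed.

Definition kernel (c a b s z : R) : R :=
  g0 a b z * Rpower (z / c) (s - 1) * exp (- (z / c)).

Definition kernel_succ_deriv (c a b s z : R) : R :=
  s / c * kernel c a b s z - kernel c a b (s + 1) z / c - b * (kernel c a b (s + 1) z / (a + z)).

Lemma kernel_pos c a b s z : 0 < kernel c a b s z.
Proof.
  unfold kernel. apply Rmult_lt_0_compat; [apply Rmult_lt_0_compat |];
    [apply Rpower_pos | apply Rpower_pos | apply exp_pos].
Qed.

Section Kernel.

Variables c a b : R.
Hypothesis c_pos : 0 < c.
Hypothesis a_ge0 : 0 <= a.
Hypothesis b_ge0 : 0 <= b.

Lemma kernel_succ s z : 0 < z -> kernel c a b (s + 1) z = z / c * kernel c a b s z.
Proof.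
  intros Hz. unfold kernel. replace (s + 1 - 1) with (s - 1 + 1) by ring.
  rewrite Rpower_plus, Rpower_1 by (apply Rdiv_lt_0_compat; lra). ring.
Qed.

Lemma kernel_continuous s z : 0 < z -> continuous (kernel c a b s) z.
Proof.
  intros Hz. apply (@ex_derive_continuous R_AbsRing R_NormedModule).
  unfold kernel, g0, Rpower. auto_derive.
  repeat split; try lra. apply Rmult_lt_0_compat; [lra | apply Rinv_0_lt_compat; lra].
Qed.

Lemma kernel_le_near_0 s : 0 < s -> (0 < a \/ b < s) ->
  exists sg Q, 0 < sg /\ 0 <= Q /\
    forall z, 0 < z <= 1 -> kernel c a b s z <= Q * Rpower z (sg - 1).
Proof.
  intros Hs Hint.
  assert (Hlog : exists sg q, 0 < sg /\ forall z, 0 < z <= 1 ->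
            - b * ln (a + z) + (s - 1) * (ln z - ln c) <= q + (sg - 1) * ln z).
  { destruct Hint as [Ha | Hbs].
    - exists s, (- b * ln a - (s - 1) * ln c). split; [lra |]. intros z Hz.
      assert (ln a <= ln (a + z)) by (apply ln_le; lra). nra.
    - exists (s - b), (- (s - 1) * ln c). split; [lra |]. intros z Hz.
      assert (ln z <= ln (a + z)) by (apply ln_le; lra). nra. }
  destruct Hlog as (sg & q & Hsg & Hq).
  exists sg, (exp q). split; [exact Hsg | split; [left; apply exp_pos |]].
  intros z Hz. specialize (Hq z Hz).
  assert (exp (- (z / c)) <= 1).
  { apply exp_le_1. assert (0 < z / c) by (apply Rdiv_lt_0_compat; lra). lra. }
  unfold kernel, g0, Rpower. rewrite ln_div by lra.
  rewrite <- exp_plus.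
  apply Rle_trans with (exp (- b * ln (a + z) + (s - 1) * (ln z - ln c))).
  - rewrite <- (Rmult_1_r (exp (_ + _))) at 2. apply Rmult_le_compat_l; [left; apply exp_pos | lra].
  - rewrite <- exp_plus. apply exp_le_exp. lra.
Qed.

Lemma kernel_le_tail s : 1 <= s ->
  exists C, 0 < C /\ forall z, 1 <= z -> kernel c a b s z <= C * exp (- (z / c) / 2).
Proof.
  intros Hs.
  destruct (Rpower_mul_exp_le (s - 1)) as (C & HC & HCb); [lra |].
  exists C. split; [exact HC |]. intros z Hz.
  assert (Hzc : 0 < z / c) by (apply Rdiv_lt_0_compat; lra).
  assert (Hg : g0 a b z <= 1).
  { unfold g0, Rpower. apply exp_le_1.
    assert (0 <= ln (a + z)) by (rewrite <- ln_1; apply ln_le; lra). nra. }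
  assert (0 < Rpower (z / c) (s - 1) * exp (- (z / c))) by (apply Rmult_lt_0_compat; [apply Rpower_pos | apply exp_pos]).
  assert (0 < g0 a b z) by apply Rpower_pos.
  unfold kernel. rewrite Rmult_assoc.
  specialize (HCb _ Hzc). nra.
Qed.

Lemma RInt_kernel_le s : 1 <= s -> (0 < a \/ b < s) ->
  exists B, forall u v, 0 < u -> u <= v -> RInt (kernel c a b s) u v <= B.
Proof.
  intros Hs Hint.
  destruct (kernel_le_near_0 s ltac:(lra) Hint) as (sg & Q & Hsg & HQ & Hnear).
  destruct (kernel_le_tail s Hs) as (C & HC & Htail).
  assert (Hk0 : forall x, 0 < x -> 0 <= kernel c a b s x) by (intros; left; apply kernel_pos).
  assert (Hkc : forall x, 0 < x -> continuous (kernel c a b s) x) by (intros; apply kernel_continuous; lra).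
  exists (Q / sg + 2 * c * C). intros u v Hu Huv.
  set (u' := Rmin u 1). set (v' := Rmax v 1).
  assert (Hu' : 0 < u' <= 1) by (unfold u'; split; [apply Rmin_case; lra | apply Rmin_r]).
  assert (u' <= u) by apply Rmin_l.
  assert (Hv' : 1 <= v') by apply Rmax_r.
  assert (v <= v') by apply Rmax_l.
  apply Rle_trans with (RInt (kernel c a b s) u' v'); [apply RInt_le_widen; auto; lra |].
  rewrite <- (RInt_Chasles (kernel c a b s) u' 1 v') by (apply ex_RInt_pos; auto; lra).
  unfold plus; simpl. apply Rplus_le_compat.
  - apply Rle_trans with (RInt (fun z => Q * Rpower z (sg - 1)) u' 1); [| now apply RInt_Rpower_le].
    apply RInt_le; try lra; [apply ex_RInt_pos; auto; lra | |].
    + apply (ex_RInt_pos (fun z => Q * Rpower z (sg - 1))); [| lra | lra].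
      intros x Hx. apply (@ex_derive_continuous R_AbsRing R_NormedModule).
      unfold Rpower. auto_derive. lra.
    + intros x Hx. apply Hnear. lra.
  - apply Rle_trans with (RInt (fun z => C * exp (- (z / c) / 2)) 1 v'); [| apply RInt_exp_le; lra].
    apply RInt_le; try lra; [apply ex_RInt_pos; auto; lra | |].
    + apply (ex_RInt_pos (fun z => C * exp (- (z / c) / 2))); [| lra | lra].
      intros x _. apply (@ex_derive_continuous R_AbsRing R_NormedModule). auto_derive. lra.
    + intros x Hx. apply Htail. lra.
Qed.

Lemma is_RInt_kernel s : 1 <= s -> (0 < a \/ b < s) ->
  is_RInt_0_oo (kernel c a b s) (RInt_0_oo (kernel c a b s)).
Proof.
  intros Hs Hint.
  destruct (RInt_kernel_le s Hs Hint) as [B HB].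
  destruct (is_RInt_0_oo_of_bounded (kernel c a b s)
              (fun x _ => Rlt_le _ _ (kernel_pos c a b s x))
              (fun x Hx => kernel_continuous s x Hx) B HB) as (L & HL & _).
  now rewrite (is_RInt_gen_unique _ _ HL).
Qed.

Lemma RInt_kernel_pos s : 1 <= s -> (0 < a \/ b < s) -> 0 < RInt_0_oo (kernel c a b s).
Proof.
  intros Hs Hint.
  apply Rlt_le_trans with (RInt (kernel c a b s) 1 2).
  - apply RInt_gt_0; [lra | intros; apply kernel_pos | intros; apply kernel_continuous; lra].
  - apply (RInt_le_of_is_RInt_0_oo (kernel c a b s));
      [intros; left; apply kernel_pos | intros; apply kernel_continuous; lra
      | now apply is_RInt_kernel | lra | lra].
Qed.

Lemma kernel_succ_is_derive s z : 0 < z ->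
  is_derive (kernel c a b (s + 1)) z (kernel_succ_deriv c a b s z).
Proof.
  intros Hz.
  assert (Hzc : 0 < z * / c) by (apply Rmult_lt_0_compat; [lra | apply Rinv_0_lt_compat; lra]).
  unfold kernel_succ_deriv, kernel, g0, Rpower. auto_derive; [repeat split; lra |].
  replace (s + 1 - 1) with s by ring. unfold Rdiv.
  replace (exp ((s - 1) * ln (z * / c))) with (exp (s * ln (z * / c)) * / (z * / c)).
  - field. repeat split; lra.
  - replace (s * ln (z * / c)) with ((s - 1) * ln (z * / c) + ln (z * / c)) by ring.
    rewrite exp_plus, exp_ln by lra. field. lra.
Qed.

Lemma kernel_succ_lim_0 s : 0 < s -> (0 < a \/ b < s) ->
  filterlim (kernel c a b (s + 1)) (at_right 0) (locally 0).
Proof.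
  intros Hs Hint.
  destruct (kernel_le_near_0 s Hs Hint) as (sg & Q & Hsg & HQ & Hnear).
  change (locally 0) with (Rbar_locally 0).
  apply (filterlim_le_le (fun _ => 0) _ (fun z => Q / c * exp (sg * ln z))).
  - exists (mkposreal 1 Rlt_0_1). intros z Hz Hz0. simpl in *.
    apply Rabs_lt_between in Hz. unfold minus, plus, opp in Hz; simpl in Hz.
    split; [left; apply kernel_pos |].
    rewrite kernel_succ by lra.
    apply Rle_trans with (z / c * (Q * Rpower z (sg - 1))).
    + apply Rmult_le_compat_l; [left; apply Rdiv_lt_0_compat; lra | apply Hnear; lra].
    + replace (exp (sg * ln z)) with (z * Rpower z (sg - 1)); [right; field; lra |].
      unfold Rpower. rewrite <- (exp_ln z) at 1 by lra. rewrite <- exp_plus. f_equal. ring.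
  - apply filterlim_const.
  - apply filterlim_scal_exp_0.
    apply (filterlim_comp _ _ _ ln (Rmult sg) _ _ _ is_lim_ln_0), filterlim_Rmult_m_infty.
    apply is_Rbar_mult_m_infty_pos. exact Hsg.
Qed.

Lemma kernel_lim_p_infty s : 1 <= s ->
  filterlim (kernel c a b s) (Rbar_locally p_infty) (locally 0).
Proof.
  intros Hs. destruct (kernel_le_tail s Hs) as (C & HC & Htail).
  change (locally 0) with (Rbar_locally 0).
  apply (filterlim_le_le (fun _ => 0) _ (fun z => C * exp (- / (2 * c) * z))).
  - exists 1. intros z Hz. split; [left; apply kernel_pos |].
    replace (- / (2 * c) * z) with (- (z / c) / 2) by (field; lra). apply Htail. lra.
  - apply filterlim_const.
  - apply filterlim_scal_exp_0, filterlim_Rmult_m_infty.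
    apply is_Rbar_mult_p_infty_neg. simpl.
    assert (0 < / (2 * c)) by (apply Rinv_0_lt_compat; lra). lra.
Qed.

Lemma kernel_succ_Derive_continuous s z : 0 < z ->
  continuous (Derive (kernel c a b (s + 1))) z.
Proof.
  intros Hz.
  apply continuous_ext_loc with (kernel_succ_deriv c a b s).
  - exists (mkposreal z Hz). intros y Hy. simpl in Hy.
    apply Rabs_lt_between in Hy. unfold minus, plus, opp in Hy; simpl in Hy.
    symmetry. apply is_derive_unique, kernel_succ_is_derive. lra.
  - apply (@ex_derive_continuous R_AbsRing R_NormedModule).
    unfold kernel_succ_deriv, kernel, g0, Rpower. auto_derive.
    assert (0 < z * / c) by (apply Rmult_lt_0_compat; [lra | apply Rinv_0_lt_compat; lra]).
    repeat split; lra.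
Qed.

Lemma is_RInt_kernel_succ_deriv s : 1 <= s -> (0 < a \/ b < s) ->
  is_RInt_0_oo (kernel_succ_deriv c a b s) 0.
Proof.
  intros Hs Hint.
  assert (H := is_RInt_gen_Derive (kernel c a b (s + 1)) 0 0
    (filter_prod_pos _ (fun x Hx => ex_intro _ _ (kernel_succ_is_derive s x Hx)))
    (filter_prod_pos _ (kernel_succ_Derive_continuous s))
    (kernel_succ_lim_0 s ltac:(lra) Hint) (kernel_lim_p_infty (s + 1) ltac:(lra))).
  rewrite Rminus_eq_0 in H.
  eapply is_RInt_gen_ext; [| exact H].
  eapply filter_imp;
    [| apply (filter_prod_pos (fun x => Derive (kernel c a b (s + 1)) x = kernel_succ_deriv c a b s x))].
  - intros ab Hab x Hx. apply Hab. lra.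
  - intros x Hx. apply is_derive_unique, kernel_succ_is_derive, Hx.
Qed.

Lemma is_RInt_kernel_succ_div s : 1 <= s -> (0 < a \/ b < s) ->
  exists M, is_RInt_0_oo (fun z => kernel c a b (s + 1) z / (a + z)) M /\
    0 <= c * M <= RInt_0_oo (kernel c a b s).
Proof.
  intros Hs Hint.
  destruct (is_RInt_0_oo_of_le (fun z => kernel c a b (s + 1) z / (a + z))
              (fun z => / c * kernel c a b s z) (/ c * RInt_0_oo (kernel c a b s)))
    as (M & HM & HM0 & HMle).
  - intros z Hz. rewrite kernel_succ by lra.
    assert (0 < kernel c a b s z) by apply kernel_pos.
    split; [apply Rdiv_le_0_compat; [apply Rmult_le_pos; [apply Rdiv_le_0_compat|] |]; lra |].
    apply Rmult_le_reg_r with (c * (a + z)); [nra |].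
    replace (z / c * kernel c a b s z / (a + z) * (c * (a + z))) with (z * kernel c a b s z) by (field; lra).
    replace (/ c * kernel c a b s z * (c * (a + z))) with ((a + z) * kernel c a b s z) by (field; lra).
    nra.
  - intros z Hz. apply (continuous_mult (kernel c a b (s + 1)) (fun y => / (a + y))).
    + apply kernel_continuous, Hz.
    + apply (@ex_derive_continuous R_AbsRing R_NormedModule). auto_derive. lra.
  - intros z Hz. apply (continuous_mult (fun _ => / c) (kernel c a b s)).
    + apply continuous_const.
    + apply kernel_continuous, Hz.
  - apply (is_RInt_gen_scal (kernel c a b s) (/ c)), is_RInt_kernel; assumption.
  - exists M. split; [exact HM |].
    split; [apply Rmult_le_pos; lra |].
    apply Rmult_le_compat_l with (r := c) in HMle; [| lra].
    rewrite <- Rmult_assoc, Rinv_r, Rmult_1_l in HMle by lra. exact HMle.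
Qed.

Lemma RInt_kernel_succ s : 1 <= s -> (0 < a \/ b < s) ->
  (s - b) * RInt_0_oo (kernel c a b s) <= RInt_0_oo (kernel c a b (s + 1))
  <= s * RInt_0_oo (kernel c a b s).
Proof.
  intros Hs Hint.
  destruct (is_RInt_kernel_succ_div s Hs Hint) as (M & HM & HcM).
  set (L := RInt_0_oo (kernel c a b s) : R) in *.
  set (L' := RInt_0_oo (kernel c a b (s + 1)) : R).
  assert (HL := is_RInt_kernel s Hs Hint).
  assert (HL' := is_RInt_kernel (s + 1) ltac:(lra) ltac:(lra)).
  assert (HE := is_RInt_gen_minus _ _ _ _
    (is_RInt_gen_minus _ _ _ _ (is_RInt_gen_scal _ (s / c) _ HL) (is_RInt_gen_scal _ (/ c) _ HL'))
    (is_RInt_gen_scal _ b _ HM)).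
  apply (is_RInt_gen_ext _ (kernel_succ_deriv c a b s)) in HE.
  2: { apply filter_forall. intros ab x _. unfold kernel_succ_deriv, minus, plus, opp, scal; simpl.
       unfold mult; simpl. unfold Rdiv. ring. }
  apply (@is_RInt_gen_unique R_CompleteNormedModule) in HE; try typeclasses eauto.
  rewrite (is_RInt_gen_unique _ _ (is_RInt_kernel_succ_deriv s Hs Hint)) in HE.
  unfold minus, plus, opp, scal in HE; simpl in HE; unfold mult in HE; simpl in HE.
  fold L L' in HE.
  assert (HL'eq : L' = s * L - b * (c * M)).
  { assert (H' : / c * L' = s / c * L - b * M) by lra.
    replace L' with (c * (/ c * L')) by (field; lra). rewrite H'. field. lra. }
  assert (0 <= b * (c * M)) by (apply Rmult_le_pos; lra).
  assert (b * (c * M) <= b * L) by (apply Rmult_le_compat_l; lra).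
  rewrite HL'eq. split; lra.
Qed.

End Kernel.

Lemma Gamma_kernel s : Gamma s = RInt_0_oo (kernel 1 0 0 s).
Proof.
  unfold Gamma. f_equal. apply functional_extensionality. intros t.
  unfold kernel, g0, Rpower. rewrite Ropp_0, Rmult_0_l, exp_0, !Rdiv_1. ring.
Qed.

Lemma Gamma_pos s : 1 <= s -> 0 < Gamma s.
Proof. intros Hs. rewrite Gamma_kernel. apply RInt_kernel_pos; lra. Qed.

Lemma Gamma_succ s : 1 <= s -> Gamma (s + 1) = s * Gamma s.
Proof.
  intros Hs. rewrite !Gamma_kernel.
  destruct (RInt_kernel_succ 1 0 0 ltac:(lra) ltac:(lra) ltac:(lra) s Hs ltac:(lra)). lra.
Qed.

Lemma uniform_bound (P : nat -> R -> Prop) m :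
  (forall k K K', (k <= m)%nat -> K <= K' -> P k K -> P k K') ->
  (forall k, (k <= m)%nat -> exists K, P k K) ->
  exists K, forall k, (k <= m)%nat -> P k K.
Proof.
  induction m as [| m IH]; intros Hmono Hex.
  - destruct (Hex O (le_n O)) as [K HK]. exists K. intros k Hk.
    replace k with O by lia. exact HK.
  - destruct IH as [K1 HK1].
    { intros k K K' Hk. apply Hmono. lia. }
    { intros k Hk. apply Hex. lia. }
    destruct (Hex (S m) (le_n _)) as [K2 HK2].
    exists (Rmax K1 K2). intros k Hk. destruct (Nat.eq_dec k (S m)) as [-> | Hne].
    + apply Hmono with K2; [lia | apply Rmax_r | exact HK2].
    + apply Hmono with K1; [lia | apply Rmax_l | apply HK1; lia].
Qed.

Section Weights.

Variables (p : nat) (a b : R).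
Hypothesis p_ge2 : (2 <= p)%nat.
Hypothesis a_ge0 : 0 <= a.
Hypothesis b_ge0 : 0 <= b.
Hypothesis b_le : b <= INR p / 2.
Hypothesis integrable_at_0 : 0 < a \/ b < INR p / 2.

Let half_p_ge1 : 1 <= INR p / 2.
Proof. apply le_INR in p_ge2. simpl in p_ge2. lra. Qed.

Lemma w_kernel k n :
  w p a b k n = RInt_0_oo (kernel 2 a b (INR n + INR p / 2 + INR k)) / (2 * Gamma (INR n + INR p / 2)).
Proof.
  assert (Hn := pos_INR n). assert (Hk := pos_INR k).
  assert (HJ := is_RInt_kernel 2 a b ltac:(lra) a_ge0 b_ge0 (INR n + INR p / 2 + INR k)
                  ltac:(lra) ltac:(lra)).
  set (G := 2 * Gamma (INR n + INR p / 2)).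
  apply (is_RInt_gen_scal _ (/ G)) in HJ.
  unfold scal in HJ; simpl in HJ; unfold mult in HJ; simpl in HJ.
  unfold Rdiv. rewrite Rmult_comm.
  unfold w. apply (@is_RInt_gen_unique R_CompleteNormedModule); try typeclasses eauto.
  eapply is_RInt_gen_ext; [| exact HJ].
  apply filter_forall. intros ab z _. unfold kernel, scal; simpl; unfold mult; simpl.
  unfold G. replace (- z / 2) with (- (z / 2)) by field. unfold Rdiv. ring.
Qed.

Lemma w_pos k n : 0 < w p a b k n.
Proof.
  assert (Hn := pos_INR n). assert (Hk := pos_INR k).
  rewrite w_kernel. apply Rdiv_lt_0_compat.
  - apply RInt_kernel_pos; lra.
  - assert (0 < Gamma (INR n + INR p / 2)) by (apply Gamma_pos; lra). lra.
Qed.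

Lemma w_succ_bounds k n :
  (INR n + INR p / 2 + INR k - b) * w p a b k n <= (INR n + INR p / 2) * w p a b k (S n)
  <= (INR n + INR p / 2 + INR k) * w p a b k n.
Proof.
  assert (Hn := pos_INR n). assert (Hk := pos_INR k).
  set (s0 := INR n + INR p / 2). set (s := s0 + INR k).
  assert (Hs0 : 1 <= s0) by (unfold s0; lra).
  assert (HG : 0 < Gamma s0) by (apply Gamma_pos; lra).
  rewrite !w_kernel, S_INR.
  replace (INR n + 1 + INR p / 2) with (s0 + 1) by (unfold s0; ring).
  replace (s0 + 1 + INR k) with (s + 1) by (unfold s; ring).
  rewrite Gamma_succ by lra. fold s0 s.
  destruct (RInt_kernel_succ 2 a b ltac:(lra) a_ge0 b_ge0 s ltac:(unfold s; lra)
              ltac:(unfold s, s0; lra)) as [Hlo Hhi].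
  replace (s0 * (RInt_0_oo (kernel 2 a b (s + 1)) / (2 * (s0 * Gamma s0))))
    with (RInt_0_oo (kernel 2 a b (s + 1)) / (2 * Gamma s0)) by (field; split; lra).
  unfold Rdiv. rewrite <- !Rmult_assoc.
  assert (0 < / (2 * Gamma s0)) by (apply Rinv_0_lt_compat; lra).
  split; apply Rmult_le_compat_r; lra.
Qed.

Lemma w_succ_le k n : w p a b k (S n) <= (1 + INR k) * w p a b k n.
Proof.
  assert (Hn := pos_INR n). assert (Hk := pos_INR k).
  destruct (w_succ_bounds k n) as [_ Hhi].
  assert (Hw := w_pos k n).
  apply Rmult_le_reg_l with (INR n + INR p / 2); [lra |].
  eapply Rle_trans; [exact Hhi |].
  assert (INR k <= (INR n + INR p / 2) * INR k) by nra. nra.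
Qed.

Lemma w_le_succ k : exists K, 0 <= K /\ forall n, w p a b k n <= K * w p a b k (S n).
Proof.
  assert (Hw0 := w_pos k 0). assert (Hw1 := w_pos k 1).
  exists (1 + INR p / 2 + w p a b k 0 / w p a b k 1).
  assert (0 < w p a b k 0 / w p a b k 1) by (apply Rdiv_lt_0_compat; lra).
  split; [lra |]. intros [| n].
  - replace (w p a b k 0) with (w p a b k 0 / w p a b k 1 * w p a b k 1) at 1 by (field; lra).
    apply Rmult_le_compat_r; lra.
  - (* at m = n + 1 >= 1: m + p/2 + k - b >= m and m + p/2 <= m (1 + p/2) *)
    assert (Hn := pos_INR n). assert (Hk := pos_INR k).
    destruct (w_succ_bounds k (S n)) as [Hlo _]. rewrite S_INR in Hlo.
    assert (Hw := w_pos k (S n)). assert (Hw' := w_pos k (S (S n))).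
    apply Rmult_le_reg_l with (INR n + 1); [lra |].
    apply Rle_trans with ((INR n + 1 + INR p / 2 + INR k - b) * w p a b k (S n)); [nra |].
    eapply Rle_trans; [exact Hlo |].
    apply Rle_trans with ((INR n + 1) * (1 + INR p / 2) * w p a b k (S (S n))).
    { apply Rmult_le_compat_r; nra. }
    rewrite Rmult_assoc. apply Rmult_le_compat_l; [lra |]. apply Rmult_le_compat_r; lra.
Qed.

Lemma w_le_succ_uniform m : exists K, 0 <= K /\
  forall k n, (k <= m)%nat -> w p a b k n <= K * w p a b k (S n).
Proof.
  destruct (uniform_bound (fun k K => 0 <= K /\ forall n, w p a b k n <= K * w p a b k (S n)) m)
    as [K HK].
  - intros k K K' _ HKK' [HK0 HKw]. split; [lra |]. intros n.
    eapply Rle_trans; [apply HKw |]. apply Rmult_le_compat_r; [apply Rlt_le, w_pos | lra].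
  - intros k _. apply w_le_succ.
  - exists K. split; [apply (HK O), Nat.le_0_l |]. intros k n Hk. apply (HK k Hk).
Qed.

End Weights.

Definition poisson (x : R) (n : nat) : R := exp (- x) * x ^ n / INR (fact n).

Lemma PoisE_poisson y f : PoisE y f = Series (fun n => poisson (y / 2) n * f n).
Proof. reflexivity. Qed.

Lemma poisson_pos x n : 0 < x -> 0 < poisson x n.
Proof.
  intros Hx. apply Rdiv_lt_0_compat; [| apply lt_0_INR, lt_O_fact].
  apply Rmult_lt_0_compat; [apply exp_pos | apply pow_lt, Hx].
Qed.

Lemma poisson_div_succ x n : 0 < x -> poisson x n / (INR n + 1) = poisson x (S n) / x.
Proof.
  intros Hx. unfold poisson. rewrite fact_simpl, mult_INR, S_INR. simpl.
  assert (0 < INR (fact n)) by apply lt_0_INR, lt_O_fact.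
  assert (0 <= INR n) by apply pos_INR.
  field. repeat split; lra.
Qed.

Lemma ex_series_poisson x (f : nat -> R) M r : 0 < x ->
  (forall n, Rabs (f n) <= M * r ^ n) -> ex_series (fun n => poisson x n * f n).
Proof.
  intros Hx Hf.
  assert (Hexp : ex_series (fun n => / INR (fact n) * (r * x) ^ n)).
  { apply ex_pseries_R. eexists. apply is_exp_Reals. }
  apply (ex_series_le (K := R_AbsRing) (V := R_CompleteNormedModule))
    with (fun n => exp (- x) * M * (/ INR (fact n) * (r * x) ^ n)).
  - intros n. unfold norm; simpl; unfold abs; simpl.
    rewrite Rabs_mult, (Rabs_right (poisson x n)) by (apply Rle_ge, Rlt_le, poisson_pos, Hx).
    apply Rle_trans with (poisson x n * (M * r ^ n)).
    + apply Rmult_le_compat_l; [apply Rlt_le, poisson_pos, Hx | apply Hf].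
    + right. unfold poisson. rewrite Rpow_mult_distr. field.
      apply Rgt_not_eq, lt_0_INR, lt_O_fact.
  - exact (ex_series_scal_l (K := R_AbsRing) (V := R_NormedModule) _ _ Hexp).
Qed.

Lemma le_pow_of_succ_le (v : nat -> R) r : 0 <= r ->
  (forall n, v (S n) <= r * v n) -> forall n, v n <= v O * r ^ n.
Proof.
  intros Hr Hv n. induction n as [| n IH]; simpl; [lra |].
  eapply Rle_trans; [apply Hv |].
  replace (v O * (r * r ^ n)) with (r * (v O * r ^ n)) by ring.
  apply Rmult_le_compat_l; assumption.
Qed.

Lemma Series_pos (u : nat -> R) : (forall n, 0 < u n) -> ex_series u -> 0 < Series u.
Proof.
  intros Hu Hex. rewrite Series_incr_1 by exact Hex.
  assert (0 <= Series (fun k => u (S k))).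
  { rewrite <- (Rmult_0_l (Series (fun k => u (S k)))), <- Series_scal_l.
    apply Series_le; [intros n; specialize (Hu (S n)); lra |].
    apply (ex_series_incr_1 (K := R_AbsRing) (V := R_NormedModule) u), Hex. }
  specialize (Hu O). lra.
Qed.

Lemma Series_shift_le (u : nat -> R) m : (forall n, 0 <= u n) -> ex_series u ->
  ex_series (fun n => u (m + n)%nat) /\ Series (fun n => u (m + n)%nat) <= Series u.
Proof.
  intros Hu Hex.
  split; [apply (ex_series_incr_n (K := R_AbsRing) (V := R_NormedModule) u), Hex |].
  destruct m as [| m]; [apply Rle_refl |].
  rewrite (Series_incr_n u (S m)) by (lia || exact Hex).
  assert (0 <= sum_f_R0 u (Nat.pred (S m))) by (apply cond_pos_sum, Hu). lra.
Qed.

Section PoissonShift.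

Variables (x K : R) (v : nat -> R).
Hypothesis x_pos : 0 < x.
Hypothesis K_ge0 : 0 <= K.
Hypothesis v_ge0 : forall n, 0 <= v n.
Hypothesis v_le_succ : forall n, v n <= K * v (S n).

Lemma poisson_shift_le l n :
  poisson x (l + n) * v (l + n)%nat / (INR n + 1)
  <= (INR l + 1) * K / x * (poisson x (S (l + n)) * v (S (l + n))).
Proof.
  assert (Hn := pos_INR n). assert (Hl := pos_INR l).
  (* the source of the factor [l + 1] in [fact (S l)] *)
  assert (Hfrac : / (INR n + 1) <= (INR l + 1) * / (INR (l + n) + 1)).
  { rewrite plus_INR.
    replace (/ (INR n + 1)) with ((INR l + 1) * / ((INR l + 1) * (INR n + 1))) by (field; lra).
    apply Rmult_le_compat_l; [lra |]. apply Rinv_le_contravar; nra. }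
  assert (Hp := poisson_pos x (l + n) x_pos). assert (Hp' := poisson_pos x (S (l + n)) x_pos).
  apply Rle_trans with ((INR l + 1) * (poisson x (l + n) / (INR (l + n) + 1)) * v (l + n)%nat).
  - unfold Rdiv.
    replace ((INR l + 1) * (poisson x (l + n) * / (INR (l + n) + 1)) * v (l + n)%nat)
      with (poisson x (l + n) * v (l + n)%nat * ((INR l + 1) * / (INR (l + n) + 1))) by ring.
    apply Rmult_le_compat_l; [apply Rmult_le_pos; [lra | apply v_ge0] | exact Hfrac].
  - rewrite poisson_div_succ by exact x_pos.
    replace ((INR l + 1) * K / x * (poisson x (S (l + n)) * v (S (l + n))))
      with ((INR l + 1) * (poisson x (S (l + n)) / x) * (K * v (S (l + n)))) by (field; lra).
    apply Rmult_le_compat_l; [apply Rmult_le_pos; [lra | apply Rdiv_le_0_compat; lra] |].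
    apply v_le_succ.
Qed.

Lemma poisson_div_pow_le l n :
  poisson x n * v n / (INR n + 1) ^ l
  <= INR (fact l) * K ^ l / x ^ l * (poisson x (l + n) * v (l + n)%nat).
Proof.
  induction l as [| l IH]; [simpl; unfold Rdiv; rewrite Rinv_1; lra |].
  assert (Hn := pos_INR n). assert (Hl := pos_INR l). assert (Hxl : 0 < x ^ l) by (apply pow_lt, x_pos).
  assert (HC : 0 <= INR (fact l) * K ^ l / x ^ l)
    by (apply Rdiv_le_0_compat; [apply Rmult_le_pos; [apply pos_INR | apply pow_le, K_ge0] | lra]).
  replace (poisson x n * v n / (INR n + 1) ^ S l)
    with (poisson x n * v n / (INR n + 1) ^ l / (INR n + 1))
    by (simpl; field; split; [apply pow_nonzero |]; lra).
  apply Rle_trans with (INR (fact l) * K ^ l / x ^ l * (poisson x (l + n) * v (l + n)%nat / (INR n + 1))).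
  { replace (INR (fact l) * K ^ l / x ^ l * (poisson x (l + n) * v (l + n)%nat / (INR n + 1)))
      with (INR (fact l) * K ^ l / x ^ l * (poisson x (l + n) * v (l + n)%nat) / (INR n + 1))
      by (unfold Rdiv; ring).
    apply Rmult_le_compat_r; [apply Rlt_le, Rinv_0_lt_compat; lra | exact IH]. }
  apply Rle_trans with (INR (fact l) * K ^ l / x ^ l
                        * ((INR l + 1) * K / x * (poisson x (S (l + n)) * v (S (l + n))))).
  { apply Rmult_le_compat_l; [exact HC | apply poisson_shift_le]. }
  right. simpl (S l + n)%nat. rewrite fact_simpl, mult_INR, S_INR. simpl pow. field. split; lra.
Qed.

Lemma Series_poisson_div_pow_le (h : nat -> R) H l :
  ex_series (fun n => poisson x n * v n) ->
  (forall n, Rabs (h n) <= H / (INR n + 1) ^ l) ->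
  Rabs (Series (fun n => poisson x n * (h n * v n)))
  <= H * (INR (fact l) * K ^ l / x ^ l) * Series (fun n => poisson x n * v n).
Proof.
  intros HS Hh.
  assert (Hpv : forall n, 0 <= poisson x n * v n)
    by (intros n; apply Rmult_le_pos; [apply Rlt_le, poisson_pos, x_pos | apply v_ge0]).
  destruct (Series_shift_le _ l Hpv HS) as [Hshift Hshift_le].
  assert (HH : 0 <= H).
  { specialize (Hh O). simpl in Hh. rewrite Rplus_0_l, pow1 in Hh.
    assert (0 <= Rabs (h O)) by apply Rabs_pos. lra. }
  set (C := H * (INR (fact l) * K ^ l / x ^ l)).
  assert (HC : 0 <= C).
  { apply Rmult_le_pos; [exact HH |]. apply Rdiv_le_0_compat; [| apply pow_lt, x_pos].
    apply Rmult_le_pos; [apply pos_INR | apply pow_le, K_ge0]. }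
  assert (Hterm : forall n, Rabs (poisson x n * (h n * v n)) <= C * (poisson x (l + n) * v (l + n)%nat)).
  { intros n. rewrite <- Rmult_assoc, (Rmult_comm (poisson x n)), Rmult_assoc, Rabs_mult,
      (Rabs_right (poisson x n * v n)) by (apply Rle_ge, Hpv).
    apply Rle_trans with (H * (poisson x n * v n / (INR n + 1) ^ l)).
    - replace (H * (poisson x n * v n / (INR n + 1) ^ l))
        with (H / (INR n + 1) ^ l * (poisson x n * v n)) by (unfold Rdiv; ring).
      apply Rmult_le_compat_r; [apply Hpv | apply Hh].
    - unfold C. rewrite Rmult_assoc. apply Rmult_le_compat_l; [exact HH | apply poisson_div_pow_le]. }
  assert (Hsum : ex_series (fun n => C * (poisson x (l + n) * v (l + n)%nat)))
    by exact (ex_series_scal_l (K := R_AbsRing) (V := R_NormedModule) _ _ Hshift).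
  eapply Rle_trans; [apply Series_Rabs |].
  - apply (ex_series_le (K := R_AbsRing) (V := R_CompleteNormedModule)) with (2 := Hsum).
    intros n. unfold norm; simpl; unfold abs; simpl. rewrite Rabs_Rabsolu. apply Hterm.
  - eapply Rle_trans; [apply Series_le; [| exact Hsum] |].
    + intros n. split; [apply Rabs_pos | apply Hterm].
    + rewrite Series_scal_l. apply Rmult_le_compat_l; assumption.
Qed.

End PoissonShift.

Lemma PoisE_ratio_le y (v h : nat -> R) r K H l :
  0 < y -> 0 <= r -> 0 <= K -> (forall n, 0 < v n) ->
  (forall n, v (S n) <= r * v n) -> (forall n, v n <= K * v (S n)) ->
  (forall n, Rabs (h n) <= H / (INR n + 1) ^ l) ->
  Rabs (PoisE y (fun n => h n * v n) / PoisE y v) <= H * INR (fact l) * (2 * K) ^ l / y ^ l.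
Proof.
  intros Hy Hr HK Hv Hvr HvK Hh.
  rewrite !PoisE_poisson. set (x := y / 2). assert (Hx : 0 < x) by (unfold x; lra).
  assert (Hv0 : forall n, 0 <= v n) by (intros n; left; apply Hv).
  assert (HS : ex_series (fun n => poisson x n * v n)).
  { apply (ex_series_poisson x v (v O) r Hx). intros n.
    rewrite Rabs_right by (apply Rle_ge, Hv0). now apply le_pow_of_succ_le. }
  assert (HS0 : 0 < Series (fun n => poisson x n * v n))
    by (apply Series_pos; [intros n; apply Rmult_lt_0_compat; [apply poisson_pos, Hx | apply Hv] | exact HS]).
  assert (Habs := Series_poisson_div_pow_le x K v Hx HK Hv0 HvK h H l HS Hh).
  unfold Rdiv at 1. rewrite Rabs_mult, Rabs_inv, (Rabs_right (Series (fun n => poisson x n * v n))) by lra.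
  apply Rmult_le_reg_r with (Series (fun n => poisson x n * v n)); [exact HS0 |].
  rewrite Rmult_assoc, Rinv_l, Rmult_1_r by lra.
  eapply Rle_trans; [exact Habs |]. right. f_equal.
  unfold x. rewrite Rpow_mult_distr. unfold Rdiv. rewrite Rpow_mult_distr, pow_inv.
  field. split; apply pow_nonzero; lra.
Qed.

Lemma bound_of_bigO (h : nat -> R) l C M :
  (forall n, (M <= n)%nat -> Rabs (h n) <= C / INR n ^ l) ->
  exists H, 0 <= H /\ forall n, Rabs (h n) <= H / (INR n + 1) ^ l.
Proof.
  intros Hh.
  destruct (uniform_bound (fun n B => Rabs (h n) * (INR n + 1) ^ l <= B) M) as [B HB].
  { intros k K K' _ HKK' HK. lra. }
  { intros k _. exists (Rabs (h k) * (INR k + 1) ^ l). apply Rle_refl. }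
  assert (HB0 : 0 <= B).
  { eapply Rle_trans; [| apply (HB O); lia]. apply Rmult_le_pos; [apply Rabs_pos |].
    apply pow_le. simpl. lra. }
  assert (HC : 0 <= 2 ^ l * Rabs C) by (apply Rmult_le_pos; [apply pow_le; lra | apply Rabs_pos]).
  exists (B + 2 ^ l * Rabs C). split; [lra |].
  intros n. assert (Hn := pos_INR n). assert (Hpow : 0 < (INR n + 1) ^ l) by (apply pow_lt; lra).
  apply Rmult_le_reg_r with ((INR n + 1) ^ l); [exact Hpow |].
  replace ((B + 2 ^ l * Rabs C) / (INR n + 1) ^ l * (INR n + 1) ^ l) with (B + 2 ^ l * Rabs C)
    by (field; lra).
  destruct (Nat.le_gt_cases n M) as [HnM | HMn]; [specialize (HB n HnM); lra |].
  (* for [n >= 1]: [(n + 1)^l <= 2^l n^l] *)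
  assert (Hn1 : 1 <= INR n) by (apply (le_INR 1); lia).
  assert (Hnl : 0 < INR n ^ l) by (apply pow_lt; lra).
  assert (Hhn : Rabs (h n) * INR n ^ l <= Rabs C).
  { apply Rle_trans with C; [| apply Rle_abs].
    apply Rmult_le_reg_r with (/ INR n ^ l); [apply Rinv_0_lt_compat, Hnl |].
    rewrite Rmult_assoc, Rinv_r, Rmult_1_r by lra. apply Hh. lia. }
  assert (Hle : (INR n + 1) ^ l <= 2 ^ l * INR n ^ l).
  { rewrite <- Rpow_mult_distr. apply pow_incr. lra. }
  assert (Rabs (h n) * (INR n + 1) ^ l <= Rabs (h n) * (2 ^ l * INR n ^ l))
    by (apply Rmult_le_compat_l; [apply Rabs_pos | exact Hle]).
  assert (Rabs (h n) * (2 ^ l * INR n ^ l) <= 2 ^ l * Rabs C).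
  { replace (Rabs (h n) * (2 ^ l * INR n ^ l)) with (2 ^ l * (Rabs (h n) * INR n ^ l)) by ring.
    apply Rmult_le_compat_l; [apply pow_le; lra | exact Hhn]. }
  lra.
Qed.

Theorem propositionA6 (p : nat) (a b : R) (l : nat) (h : nat -> R) :
  (3 <= p)%nat ->
  0 <= a -> 0 < b ->
  ((0 < a /\ INR p / 2 - 1 <= b <= INR p / 2) \/
   (a = 0 /\ INR p / 2 - 1 <= b < INR p / 2)) ->
  (l = 1%nat \/ l = 2%nat) ->
  (exists C : R, exists M : nat, forall n : nat, (M <= n)%nat ->
      Rabs (h n) <= C / (INR n) ^ l) ->
  exists d : R, 0 < d /\
    forall (k : nat) (y : R), (1 <= k <= 3)%nat -> 0 < y ->
      Rabs (PoisE y (fun n => h n * w p a b (k - 1) n) / PoisE y (w p a b (k - 1)))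
        <= d / y ^ l.
Proof.
  intros Hp Ha Hb Hab _ [C [M HCM]].
  assert (Hp2 : (2 <= p)%nat) by lia.
  assert (Hbp : b <= INR p / 2) by (destruct Hab; lra).
  assert (Hint : 0 < a \/ b < INR p / 2) by (destruct Hab; [left | right]; lra).
  destruct (bound_of_bigO h l C M HCM) as (H & HH & Hh).
  destruct (w_le_succ_uniform p a b Hp2 Ha (Rlt_le _ _ Hb) Hbp Hint 2) as (K & HK & HKw).
  set (d := H * INR (fact l) * (2 * K) ^ l).
  assert (Hd : 0 <= d).
  { apply Rmult_le_pos; [apply Rmult_le_pos; [exact HH | apply pos_INR] | apply pow_le; lra]. }
  exists (d + 1). split; [lra |].
  intros k y Hk Hy. apply Rle_trans with (d / y ^ l).
  - apply (PoisE_ratio_le y _ h (1 + INR (k - 1)) K H l); auto.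
    + assert (Hk1 := pos_INR (k - 1)). lra.
    + intros n. apply w_pos; auto; lra.
    + intros n. apply w_succ_le; auto; lra.
    + intros n. apply HKw. lia.
  - unfold Rdiv. apply Rmult_le_compat_r; [left; apply Rinv_0_lt_compat, pow_lt; lra | lra].
Qed.
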